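(* Let $r\ge3$, let $H=C_r$ be the cycle $1-2-\cdots-r-1$ and, for each $i\in\{1,\dots,r\}$, let $G_i$ be a $d_i$-regular graph of order $n_i$ with adjacency eigenvalues $d_i=\lambda_1(A(G_i)),\dots,\lambda_{n_i}(A(G_i))$. Let $G=\bigvee_{C_r}\{G_i:1\le i\le r\}$, $N_i=\sum_{j\in N_{C_r}(i)}n_j$, $\sigma(M_i(s))=\{s^2(d_i+N_i-1)-s\lambda_k(A(G_i))+1\}_{k=1}^{n_i}$ and $\lambda_1(M_i(s))=s^2(d_i+N_i-1)-sd_i+1$. Then $$\sigma(M_G(s))=\bigcup_{i=1}^r\big(\sigma(M_i(s))-\{\lambda_1(M_i(s))\}\big)\cup\sigma(F_r(s)),$$ where $F_r(s)$ is the $r\times r$ symmetric periodic Jacobi matrix with diagonal entries $\lambda_1(M_1(s)),\dots,\lambda_1(M_r(s))$, entries $(F_r(s))_{i,i+1}=(F_r(s))_{i+1,i}=-s\sqrt{n_in_{i+1}}$ for $i=1,\dots,r-1$, $(F_r(s))_{1,r}=(F_r(s))_{r,1}=-s\sqrt{n_1n_r}$, and all other entries $0$ (removing $\{\lambda_1(M_i(s))\}$ means removing one copy, corresponding to $k=1$).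
   Context: For a simple undirected graph $G$ with adjacency matrix $A$, degree matrix $D$ and identity $I$, and real $s$, the deformed Laplacian matrix is $M_G(s)=I-sA+s^2(D-I)$; $\sigma(\cdot)$ is the multiset of eigenvalues. $H$-join: given a graph $H$ on vertex set $\{1,\dots,r\}$ and pairwise vertex-disjoint graphs $G_1,\dots,G_r$, $\bigvee_H\{G_i\}$ has vertex set $\bigcup_iV(G_i)$ and edges $\bigcup_iE(G_i)$ together with all edges $uv$, $u\in V(G_i)$, $v\in V(G_j)$, for each $ij\in E(H)$. *)

From HB Require Import structures.
From mathcomp Require Import all_boot all_order all_algebra.
Set Implicit Arguments. Unset Strict Implicit. Unset Printing Implicit Defensive.
Import Order.TTheory GRing.Theory Num.Theory.
Local Open Scope ring_scope.

(* A simple graph on a finite vertex type T is a symmetric irreflexive rel T.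
   Matrices indexed by the vertices are indexed by 'I_#|T| via enum_val. *)
Section GraphMatrices.
Variable R : nzRingType.
Variables (T : finType) (e : rel T).

Definition adjmx : 'M[R]_#|T| :=
  \matrix_(i, j) (e (enum_val i) (enum_val j))%:R.

Definition degmx : 'M[R]_#|T| :=
  diag_mx (\row_i #|[set y | e (enum_val i) y]|%:R).

Definition deformed_lap (s : R) : 'M[R]_#|T| :=
  1%:M - s *: adjmx + s ^+ 2 *: (degmx - 1%:M).
End GraphMatrices.

(* multiplicity of x in the multiset sigma(M) of eigenvalues of M
   (algebraic multiplicity = root multiplicity in the characteristic polynomial) *)
Definition eigmult (R : fieldType) (m : nat) (M : 'M[R]_m) (x : R) : nat :=
  mup x (char_poly M).

Definition hjoin (r : nat) (n : 'I_r -> nat) (h : rel 'I_r)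
  (e : forall i, rel 'I_(n i)) : rel {i : 'I_r & 'I_(n i)} :=
  fun x y => if tag x == tag y then e (tag x) (tagged x) (tagged_as x y)
             else h (tag x) (tag y).

(* the cycle C_r : 1 - 2 - ... - r - 1 (0-indexed here) *)
Definition cycle_rel (r : nat) : rel 'I_r :=
  fun i j => ((val j == (val i).+1 %% r) || (val i == (val j).+1 %% r))%N.

Definition Nsum (r : nat) (n : 'I_r -> nat) (i : 'I_r) : nat :=
  (\sum_(j < r | cycle_rel i j) n j)%N.

Definition Mi (R : nzRingType) (m : nat) (e : rel 'I_m) (d N : nat) (s : R)
  : 'M[R]_#|'I_m| :=
  (s ^+ 2 * (d%:R + N%:R - 1) + 1)%:M - s *: adjmx R e.

Definition lam1 (R : nzRingType) (d N : nat) (s : R) : R :=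
  s ^+ 2 * (d%:R + N%:R - 1) - s * d%:R + 1.

Definition Fr (R : rcfType) (r : nat) (n d : 'I_r -> nat) (s : R) : 'M[R]_r :=
  \matrix_(i, j)
    if i == j then lam1 (d i) (Nsum n i) s
    else if cycle_rel i j then - s * Num.sqrt ((n i)%:R * (n j)%:R)
    else 0.

(* Order the vertices of the join block by block.  Inside block i the deformed
   Laplacian of G is M_i(s), since a vertex of G_i has degree d_i + N_i in G;
   between blocks i <> j it is -s times the all-ones matrix when ij is an edge
   of H.  So M_G(s) = D - s U A(H) U^T, with D = diag(M_i(s)) and U the 0/1
   block-indicator matrix.  Regularity makes the all-ones vector of each block
   an eigenvector, D U = U diag(lambda_1(M_i(s))), and Sylvester's identity
   det(1 + XY) = det(1 + YX) then gives, for x off the lambda_1(M_i(s)),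
     det(x - M_G) prod_i (x - lambda_1(M_i)) = prod_i det(x - M_i) det(x - Q),
   where Q = diag(lambda_1(M_i)) - s A(H) diag(n_i) is conjugate to F_H(s) by
   diag(sqrt n_i).  This polynomial identity holds everywhere, and one factor
   x - lambda_1(M_i) can be cancelled from each char M_i. *)

From HB Require Import structures.
From mathcomp Require Import all_boot all_order all_algebra.
From mathcomp Require Import perm ring.
Import Order.TTheory GRing.Theory Num.Theory.
Local Open Scope ring_scope.

Lemma horner_char_poly (R : comNzRingType) m (A : 'M[R]_m) x :
  (char_poly A).[x] = \det (x%:M - A).
Proof.
rewrite -[LHS]/(horner_eval x _) /char_poly -det_map_mx; congr (\det _).
by apply/matrixP => i j; rewrite !mxE rmorphB rmorphMn /= !horner_evalE hornerX hornerC.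
Qed.

Lemma char_poly_trmx (R : comNzRingType) m (A : 'M[R]_m) :
  char_poly A^T = char_poly A.
Proof.
by rewrite /char_poly -det_tr; congr (\det _); apply/matrixP => i j; rewrite !mxE eq_sym.
Qed.

Lemma char_poly_similar (F : fieldType) m (S A B : 'M[F]_m) :
  S \in unitmx -> S *m A = B *m S -> char_poly A = char_poly B.
Proof.
move=> S_unit SA; pose S' := map_mx polyC S.
have S'A : S' *m char_poly_mx A = char_poly_mx B *m S'.
  by rewrite /char_poly_mx mulmxBr mulmxBl -!map_mxM SA scalar_mxC.
have detS' : \det S' != 0 by rewrite det_map_mx polyC_eq0 -unitfE -unitmxE.
apply: (mulfI detS'); rewrite /char_poly -det_mulmx S'A det_mulmx.
exact: mulrC.
Qed.

Lemma eq_poly_off_seq {F : numDomainType} (S : seq F) (p q : {poly F}) :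
  (forall x, x \notin S -> p.[x] = q.[x]) -> p = q.
Proof.
move=> pq; apply/eqP; rewrite -subr_eq0.
pose g := (p - q) * \prod_(y <- S) ('X - y%:P).
have : g = 0.
  apply: (@roots_geq_poly_eq0 _ g [seq k%:R | k <- iota 0 (size g)]).
  - apply/allP => y _; rewrite /root /g hornerM horner_prod.
    have [yS|yS] := boolP (y \in S).
      by rewrite (big_rem y) //= hornerXsubC subrr mul0r mulr0.
    by rewrite !hornerE pq // subrr mul0r.
  - by rewrite map_inj_uniq ?iota_uniq // => a b /eqP; rewrite eqr_nat => /eqP.
  - by rewrite size_map size_iota.
by move/eqP; rewrite mulf_eq0 (negPf (monic_neq0 (monic_prod_XsubC _ _ _))) orbF.
Qed.

Lemma mup_prod (F : fieldType) (I : finType) (f : I -> {poly F}) x :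
  (forall i, f i != 0) -> mup x (\prod_i f i) = (\sum_i mup x (f i))%N.
Proof.
move=> f_neq0.
suff [] : \prod_i f i != 0 /\ mup x (\prod_i f i) = (\sum_i mup x (f i))%N by [].
apply: (big_rec2 (fun p m => p != 0 /\ mup x p = m)).
  by rewrite oner_neq0 mupNroot ?root1.
by move=> i p m _ [p_neq0 <-]; rewrite mulf_neq0 // mupM.
Qed.

Lemma divpXsubC_neq0 {F : fieldType} {p : {poly F}} {a} :
  p != 0 -> root p a -> p %/ ('X - a%:P) != 0.
Proof.
move=> p_neq0 pa; apply: contra_neq p_neq0 => q0.
by rewrite -(divpK (_ : 'X - a%:P %| p)) ?dvdp_XsubCl // q0 mul0r.
Qed.

Lemma mup_divXsubC {F : fieldType} {p : {poly F}} {a} x :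
  p != 0 -> root p a -> mup x (p %/ ('X - a%:P)) = (mup x p - (x == a))%N.
Proof.
move=> p_neq0 pa; have q_neq0 := divpXsubC_neq0 p_neq0 pa.
rewrite -{2}(divpK (_ : 'X - a%:P %| p)) ?dvdp_XsubCl // mupM ?polyXsubC_eq0 //.
rewrite -[mup x ('X - _)]/(mup x (('X - a%:P) ^+ 1)) mup_XsubCX eq_sym.
by case: (x == a); rewrite ?addnK ?addn0 ?subn0.
Qed.

Lemma det_reindex {R : comNzRingType} {m k} (eq_mk : m = k) {f : 'I_m -> 'I_k}
  (f_inj : injective f) (M : 'M[R]_k) :
  \det (\matrix_(i, j) M (f i) (f j)) = \det M.
Proof.
subst k; pose sg : 'S_m := perm f_inj.
have -> : \matrix_(i, j) M (f i) (f j) = row_perm sg (col_perm sg M).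
  by apply/matrixP => i j; rewrite !mxE !permE.
rewrite row_permE col_permE !det_mulmx !det_perm odd_permV.
by rewrite mulrC -mulrA -expr2 sqrr_sign mulr1.
Qed.

Lemma det_castmx {R : comNzRingType} {m k} (eq_mk : m = k) (M : 'M[R]_m) :
  \det (castmx (eq_mk, eq_mk) M) = \det M.
Proof. by case: k / eq_mk; rewrite castmx_id. Qed.

Lemma det_mxdiag (R : comNzRingType) m (p_ : 'I_m -> nat)
  (B : forall i, 'M[R]_(p_ i)) :
  \det (\mxdiag_(i < m) B i) = \prod_(i < m) \det (B i).
Proof.
elim: m p_ B => [|m IH] p_ B.
  by rewrite big_ord0; move: (\mxdiag_i _); rewrite big_ord0 => A; rewrite det_mx00.
by rewrite mxdiag_recl det_castmx det_ublock IH big_ord_recl.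
Qed.

Lemma det_sylvester (R : comNzRingType) m k (X : 'M[R]_(m, k)) (Y : 'M[R]_(k, m)) :
  \det (1%:M + X *m Y) = \det (1%:M + Y *m X).
Proof.
pose W := block_mx 1%:M (- X) Y 1%:M.
have WL : W *m block_mx 1%:M X 0 1%:M = block_mx 1%:M 0 Y (1%:M + Y *m X).
  by rewrite mulmx_block !mulmx1 !mul1mx mulmx0 addr0 subrr addr0 addrC.
have WR : block_mx 1%:M X 0 1%:M *m W = block_mx (1%:M + X *m Y) 0 Y 1%:M.
  by rewrite mulmx_block !mulmx1 !mul1mx mul0mx addNr !add0r.
have := congr1 determinant WL; have := congr1 determinant WR.
rewrite !det_mulmx !det_ublock !det_lblock !det1 !mul1r !mulr1.
by move=> <- ->.
Qed.

Lemma det_add_mulmx_eigen {F : fieldType} {m k} (W : 'M[F]_(k, m))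
  {A : 'M[F]_m} {U : 'M_(m, k)} {c : 'rV_k} :
  A *m U = U *m diag_mx c -> (forall i, c 0 i != 0) ->
  \det (A + U *m W) * \prod_i c 0 i = \det A * \det (diag_mx c + W *m U).
Proof.
move=> AU c_neq0; pose Ci := diag_mx (map_mx GRing.inv c).
have cCi : diag_mx c *m Ci = 1%:M.
  by rewrite mulmx_diag; apply/matrixP => i j; rewrite !mxE mulfV.
have Cic : Ci *m diag_mx c = 1%:M.
  by rewrite mulmx_diag; apply/matrixP => i j; rewrite !mxE mulVf.
have -> : A + U *m W = A *m (1%:M + (U *m Ci) *m W).
  by rewrite mulmxDr mulmx1 !mulmxA AU -(mulmxA U) cCi mulmx1.
rewrite det_mulmx det_sylvester -mulrA.
have -> : 1%:M + W *m (U *m Ci) = (diag_mx c + W *m U) *m Ci.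
  by rewrite mulmxDl cCi mulmxA.
by rewrite -det_diag -!det_mulmx -mulmxA Cic mulmx1.
Qed.

Lemma sum_enum_rank {R : nmodType} {T : finType} (F : 'I_#|T| -> R) :
  \sum_a F a = \sum_t F (enum_rank t).
Proof. by rewrite (reindex enum_rank) //; apply: onW_bij; exact: enum_rank_bij. Qed.

(* [Nsum] and [Fr] are, by definition, these two constructions for H = C_r. *)
Definition hjoin_nbr_order {r : nat} (h : rel 'I_r) (n : 'I_r -> nat) (i : 'I_r) : nat :=
  (\sum_(j | h i j) n j)%N.

Definition hjoin_quotient_mx {R : rcfType} {r : nat} (h : rel 'I_r)
  (n d : 'I_r -> nat) (s : R) : 'M[R]_r :=
  \matrix_(i, j)
    if i == j then lam1 (d i) (hjoin_nbr_order h n i) s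
    else if h i j then - s * Num.sqrt ((n i)%:R * (n j)%:R)
    else 0.

Lemma deformed_lapE (R : comNzRingType) (T : finType) (e : rel T) (s : R) a b :
  deformed_lap e s a b =
    (1 + s ^+ 2 * (#|[set y | e (enum_val a) y]|%:R - 1)) *+ (a == b)
    - s * (e (enum_val a) (enum_val b))%:R.
Proof. by rewrite !mxE; case: (a == b); rewrite /= ?mulr0n; ring. Qed.

Lemma MiE (R : comNzRingType) m (e : rel 'I_m) d N (s : R) a b :
  Mi e d N s a b =
    (s ^+ 2 * (d%:R + N%:R - 1) + 1) *+ (a == b) - s * (e (enum_val a) (enum_val b))%:R.
Proof. by rewrite !mxE. Qed.

Lemma Mi_row_sum (R : comNzRingType) m (e : rel 'I_m) d N (s : R) a :
  #|[set y | e (enum_val a) y]| = d -> \sum_b Mi e d N s a b = lam1 d N s.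
Proof.
move=> e_reg; under eq_bigr do rewrite MiE.
rewrite sumrB -big_distrr /= (bigD1 a) //= eqxx big1 => [|b /negPf]; last first.
  by rewrite eq_sym => ->.
rewrite -(big_enum_val (fun y => (e (enum_val a) y)%:R)) /=.
have -> : \sum_(y in 'I_m) (e (enum_val a) y)%:R = d%:R :> R.
  rewrite -e_reg -sum1dep_card natr_sum [RHS]big_mkcond.
  by apply: eq_bigr => y _; case: (e _ y).
by rewrite /lam1; ring.
Qed.

Lemma cycle_rel_irr r : (1 < r)%N -> irreflexive (@cycle_rel r).
Proof.
move=> r_gt1 i; rewrite /cycle_rel orbb; apply/negbTE.
have [i_lt|i_ge] := ltnP (val i).+1 r.
  by rewrite modn_small // ltn_eqF.
have -> : (val i).+1 = r by apply/eqP; rewrite eqn_leq i_ge ltn_ord.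
by rewrite modnn -lt0n -ltnS (leq_trans r_gt1 i_ge).
Qed.

Section RegularHJoin.
Variables (R : rcfType) (r : nat) (h : rel 'I_r) (n d : 'I_r -> nat).
Variables (e : forall i, rel 'I_(n i)) (s : R).
Hypothesis h_irr : irreflexive h.
Hypothesis n_gt0 : forall i, (0 < n i)%N.
Hypothesis e_reg : forall i (v : 'I_(n i)), #|[set w | e i v w]| = d i.

Local Notation V := ({i : 'I_r & 'I_(n i)}) (only parsing).
Local Notation ML := (deformed_lap (hjoin h e) s).
Local Notation lam i := (lam1 (d i) (hjoin_nbr_order h n i) s).
Local Notation M i := (Mi (e i) (d i) (hjoin_nbr_order h n i) s).
Local Notation blk a := (tag (enum_val a)).

Lemma big_hjoin (T : Type) (idx : T) (op : Monoid.com_law idx) (F : V -> T) :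
  \big[op/idx]_(u : V) F u = \big[op/idx]_i \big[op/idx]_(k : 'I_(n i)) F (Tagged _ k).
Proof. by rewrite sig_big_dep; apply: eq_big => // -[]. Qed.

Lemma hjoin_degree (u : V) :
  #|[set w | hjoin h e u w]| = (d (tag u) + hjoin_nbr_order h n (tag u))%N.
Proof.
case: u => i k /=; rewrite -sum1dep_card big_mkcond /= big_hjoin (bigD1 i) //=.
congr (_ + _)%N.
  rewrite -(e_reg i k) -sum1dep_card [RHS]big_mkcond /=; apply: eq_bigr => l _.
  by rewrite /hjoin /= eqxx tagged_asE.
rewrite /hjoin_nbr_order [RHS]big_mkcond [RHS](bigD1 i) //= h_irr add0n.
apply: eq_bigr => j ji; rewrite /hjoin /= eq_sym (negbTE ji).
by case: (h i j); [rewrite sum1_card card_ord | rewrite big1].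
Qed.

Lemma hjoin_lap_block i (k l : 'I_(n i)) :
  ML (enum_rank (Tagged _ k)) (enum_rank (Tagged _ l)) =
  M i (enum_rank k) (enum_rank l).
Proof.
rewrite deformed_lapE MiE !enum_rankK hjoin_degree !(inj_eq enum_rank_inj).
rewrite eq_Tagged /hjoin /= eqxx tagged_asE natrD.
by case: (k == l); rewrite /= ?mulr0n; ring.
Qed.

Lemma hjoin_lap_offblock a b :
  blk a != blk b -> ML a b = - s * (h (blk a) (blk b))%:R.
Proof.
move=> ab; have /negPf a_neq_b : a != b by apply: contra_neq ab => ->.
by rewrite deformed_lapE a_neq_b /hjoin (negPf ab) mulr0n sub0r mulNr.
Qed.

Let D : 'M[R]_#|{: V}| := \matrix_(a, b) if blk a == blk b then ML a b else 0.
Let U : 'M[R]_(#|{: V}|, r) := \matrix_(a, i) (blk a == i)%:R.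
Let C : 'M[R]_r := \matrix_(i, j) (h i j)%:R.

Let DE a b : D a b = if blk a == blk b then ML a b else 0. Proof. exact: mxE. Qed.
Let UE a i : U a i = (blk a == i)%:R. Proof. exact: mxE. Qed.

Lemma mul_blk_mx p (X : 'M[R]_(r, p)) : U *m X = \matrix_(a, j) X (blk a) j.
Proof.
apply/matrixP => a j; rewrite !mxE (bigD1 (blk a)) //= big1 => [|i /negPf ai].
  by rewrite mxE eqxx mul1r addr0.
by rewrite mxE eq_sym ai mul0r.
Qed.

Lemma hjoin_lap_split : ML = D - s *: (U *m C *m U^T).
Proof.
apply/matrixP => a b; rewrite -[_ *m U^T]trmxK trmx_mul trmxK !mul_blk_mx.
have [ab|ab] := eqVneq (blk a) (blk b); first by rewrite !mxE ab eqxx h_irr mulr0 subr0.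
by rewrite hjoin_lap_offblock // !mxE (negPf ab) sub0r mulNr.
Qed.

Lemma trmx_blk_mul : U^T *m U = diag_mx (\row_i (n i)%:R).
Proof.
apply/matrixP => i j; rewrite !mxE sum_enum_rank big_hjoin.
under eq_bigr do under eq_bigr do rewrite mxE !UE enum_rankK /=.
rewrite (bigD1 i) //= [X in _ + X]big1 => [|i' /negPf i'i]; last first.
  by apply: big1 => k _; rewrite i'i mul0r.
rewrite eqxx addr0; under eq_bigr do rewrite mul1r.
by rewrite sumr_const card_ord; case: (i == j); rewrite ?mul0rn.
Qed.

Lemma blk_diag_mul : D *m U = U *m diag_mx (\row_i lam i).
Proof.
apply/matrixP => a i; rewrite mul_mx_diag !mxE -[a]enum_valK.
case: (enum_val a) => j k; rewrite enum_rankK /= sum_enum_rank big_hjoin.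
under eq_bigr do under eq_bigr do rewrite DE UE !enum_rankK /=.
rewrite (bigD1 j) //= [X in _ + X]big1 => [|j' /negPf j'j]; last first.
  by apply: big1 => l _; rewrite eq_sym j'j mul0r.
under eq_bigr do rewrite eqxx hjoin_lap_block.
rewrite addr0 -big_distrl /= -(sum_enum_rank (M j (enum_rank k))) Mi_row_sum.
  by rewrite mulrC; case: eqP => [->|_]; rewrite ?mul0r.
by rewrite enum_rankK e_reg.
Qed.

Lemma det_blk_diag x : \det (x%:M - D) = \prod_i \det (x%:M - M i).
Proof.
pose phi k : 'I_#|{: V}| := enum_rank (tagnat.sig k).
have phi_inj : injective phi by move=> k l /enum_rank_inj /tagnat.sig_inj.
have phi_Rank i k : phi (tagnat.Rank i k) = enum_rank (Tagged _ k).
  by rewrite /phi /tagnat.Rank tagnat.rankK.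
pose B i := \matrix_(k, l) (x%:M - M i) (enum_rank k) (enum_rank l) : 'M_(n i).
have xDE a b : (x%:M - D) a b = x *+ (a == b) - (if blk a == blk b then ML a b else 0).
  by rewrite !mxE.
have blocks : \matrix_(k, l) (x%:M - D) (phi k) (phi l) = \mxdiag_i B i.
  rewrite -[LHS]submxblockK; apply/eq_mxblockP => i j; apply/matrixP => k l.
  rewrite /submxblock /mxsub [LHS]mxE [LHS]mxE !phi_Rank xDE !enum_rankK /=.
  rewrite (inj_eq enum_rank_inj).
  have [ij|ij] := eqVneq i j; last first.
    have /negPf -> : Tagged _ k != Tagged _ l :> V by apply: contra_neq ij => /(congr1 tag).
    by rewrite mxE subr0.
  subst j.
  rewrite hjoin_lap_block conform_mx_id /B [RHS]mxE [RHS]mxE [x%:M _ _]mxE.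
  rewrite (inj_eq enum_rank_inj) eq_Tagged; congr (_ + _); by rewrite [RHS]mxE.
rewrite -(det_reindex (esym tagnat.card) phi_inj) blocks det_mxdiag.
by apply: eq_bigr => i _; exact: (det_reindex (esym (card_ord _)) enum_rank_inj).
Qed.

Lemma root_char_poly_Mi i : root (char_poly (M i)) (lam i).
Proof.
rewrite -char_poly_trmx -eigenvalue_root_char; apply/eigenvalueP.
exists (const_mx 1); last first.
  apply/eqP => /matrixP /(_ 0 (enum_rank (Ordinal (n_gt0 i)))).
  by rewrite !mxE; apply/eqP; rewrite oner_neq0.
apply/rowP => b; rewrite mxE [RHS]mxE [const_mx _ _ _]mxE mulr1.
under eq_bigr do rewrite mxE mxE mul1r.
by rewrite Mi_row_sum // e_reg.
Qed.

Let Q : 'M[R]_r := diag_mx (\row_i lam i) - s *: (C *m diag_mx (\row_i (n i)%:R)).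

Lemma char_poly_quotient : char_poly Q = char_poly (hjoin_quotient_mx h n d s).
Proof.
pose S : 'M[R]_r := diag_mx (\row_i Num.sqrt (n i)%:R).
apply: (@char_poly_similar _ _ S).
  rewrite unitmxE unitfE det_diag; apply/prodf_neq0 => i _.
  by rewrite mxE sqrtr_eq0 -ltNge ltr0n.
apply/matrixP => i j; rewrite mul_diag_mx mul_mx_diag /Q mul_mx_diag !mxE.
have [<-|ij] := eqVneq i j; first by rewrite h_irr /=; ring.
rewrite /= mulr0n sub0r; case: (h i j) => /=; last by rewrite mulr0n !(mul0r, mulr0, oppr0).
rewrite sqrtrM ?ler0n // -[in LHS](sqr_sqrtr (ler0n R (n j))) expr2 /=.
ring.
Qed.

Lemma det_hjoin_lap x : (forall i, x != lam i) ->
  \det (x%:M - ML) * \prod_i (x - lam i) =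
  \prod_i \det (x%:M - M i) * \det (x%:M - Q).
Proof.
move=> x_neq_lam; pose c := \row_i (x - lam i).
have c_neq0 i : c 0 i != 0 by rewrite mxE subr_eq0.
have diag_c : diag_mx c = x%:M - diag_mx (\row_i lam i).
  by apply/matrixP => i j; rewrite !mxE mulrnBl.
have AU : (x%:M - D) *m U = U *m diag_mx c.
  by rewrite diag_c mulmxBr mul_mx_scalar mulmxBl mul_scalar_mx blk_diag_mul.
have := det_add_mulmx_eigen (s *: (C *m U^T)) AU c_neq0.
rewrite -scalemxAr mulmxA -scalemxAl -(mulmxA C) trmx_blk_mul diag_c det_blk_diag.
have -> : x%:M - D + s *: (U *m C *m U^T) = x%:M - ML.
  by rewrite hjoin_lap_split opprB addrCA addrC.
have -> : x%:M - diag_mx (\row_i lam i) + s *: (C *m diag_mx (\row_i (n i)%:R)) = x%:M - Q.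
  by rewrite /Q opprB addrCA addrC.
by under eq_bigr do rewrite mxE.
Qed.

Lemma char_poly_hjoin_lap_mul :
  char_poly ML * \prod_i ('X - (lam i)%:P) =
  \prod_i char_poly (M i) * char_poly (hjoin_quotient_mx h n d s).
Proof.
rewrite -char_poly_quotient; apply: (eq_poly_off_seq [seq lam i | i <- enum 'I_r]).
move=> x x_notin; rewrite !hornerM !horner_prod !horner_char_poly.
under eq_bigr do rewrite hornerXsubC.
under [in RHS]eq_bigr do rewrite horner_char_poly.
apply: det_hjoin_lap => i; apply: contraNneq x_notin => ->.
by apply/mapP; exists i; rewrite ?mem_enum.
Qed.

Lemma char_poly_hjoin_lap :
  char_poly ML = \prod_i (char_poly (M i) %/ ('X - (lam i)%:P))
                 * char_poly (hjoin_quotient_mx h n d s).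
Proof.
have XsubC_neq0 : \prod_i ('X - (lam i)%:P) != 0 :> {poly R}.
  exact/monic_neq0/monic_prod_XsubC.
apply: (mulIf XsubC_neq0); rewrite char_poly_hjoin_lap_mul mulrAC -big_split /=.
congr (_ * _); apply: eq_bigr => i _.
by rewrite divpK // dvdp_XsubCl root_char_poly_Mi.
Qed.

Theorem eigmult_hjoin x :
  eigmult ML x =
  (\sum_i (eigmult (M i) x - (x == lam i))
   + eigmult (hjoin_quotient_mx h n d s) x)%N.
Proof.
have cp_neq0 m (A : 'M[R]_m) : char_poly A != 0 := monic_neq0 (char_poly_monic A).
have q_neq0 i : char_poly (M i) %/ ('X - (lam i)%:P) != 0.
  exact: divpXsubC_neq0 (cp_neq0 _ _) (root_char_poly_Mi i).
have prod_q_neq0 : \prod_i (char_poly (M i) %/ ('X - (lam i)%:P)) != 0.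
  by apply/prodf_neq0 => i _.
rewrite /eigmult char_poly_hjoin_lap mupM // mup_prod //.
congr (_ + _)%N; apply: eq_bigr => i _.
by rewrite mup_divXsubC ?cp_neq0 ?root_char_poly_Mi.
Qed.

End RegularHJoin.

Theorem corollary6p6 (R : rcfType) (r : nat) (n d : 'I_r -> nat)
  (e : forall i : 'I_r, rel 'I_(n i)) (s : R) :
  (3 <= r)%N ->
  (forall i, (0 < n i)%N) ->
  (forall i, symmetric (e i)) ->
  (forall i, irreflexive (e i)) ->
  (forall i (v : 'I_(n i)), #|[set w | e i v w]| = d i) ->
  forall x : R,
    eigmult (deformed_lap (hjoin (@cycle_rel r) e) s) x =
    (\sum_(i < r)
        (eigmult (Mi (e i) (d i) (Nsum n i) s) x - (x == lam1 (d i) (Nsum n i) s))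
     + eigmult (Fr n d s) x)%N.
Proof.
move=> r_ge3 n_gt0 _ _ e_reg x.
by apply: eigmult_hjoin => //; apply: cycle_rel_irr; apply: ltnW.
Qed.
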